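(* There is a constant $C>0$ such that $f^{\Delta_n}_{d_n}=O(C^{d_n})$ as $n\to\infty$.
   Context: For a squarefree positive integer $k$ let $P(k)$ be its set of prime factors ($P(1)=\emptyset$). $\Delta_n$ is the abstract simplicial complex $\{P(k):1\le k\le n,\ k\text{ squarefree}\}$; a $d$-simplex is a member of cardinality $d+1$, $d_n=\dim\Delta_n$ is the largest such $d$, and $f^{\Delta_n}_{d_n}$ is the number of $d_n$-simplices of $\Delta_n$ (i.e. the number of squarefree $m\le n$ with exactly $d_n+1$ prime factors). *)

From HB Require Import structures.
From mathcomp Require Import all_boot all_order all_algebra.
Set Implicit Arguments. Unset Strict Implicit. Unset Printing Implicit Defensive.

Definition squarefree (k : nat) : bool :=
  (0 < k) && all (fun p => ~~ (p * p %| k)) (primes k).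

Definition nprimes (k : nat) : nat := size (primes k).

(* d_n + 1 : the largest cardinality of a face P(k), 1 <= k <= n squarefree. *)
Definition maxface (n : nat) : nat :=
  \max_(1 <= k < n.+1 | squarefree k) nprimes k.

(* d_n = dim Delta_n (as a nat; equals maxface n - 1 whenever n >= 2). *)
Definition dim_Delta (n : nat) : nat := (maxface n).-1.

Definition ftop (n : nat) : nat :=
  #|[set m : 'I_n.+1 | (1 <= m) && squarefree m && (nprimes m == maxface n)]|.

(* Let k = d_n + 1 and let q be the prime with exactly k primes below it.  The
   primorial of q.+1 is squarefree with k + 1 prime factors, so n < P q where P is
   the primorial of q.  A counted m splits as g h with g the part of m below q, a
   divisor of P (2^k choices), and h the product of the j prime factors of m that
   are at least q.  The j primes of P missing from g multiply to c = P / g, so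
   q^j <= h < q c; a product of j distinct numbers below q is that close to q^j only
   if j = O(sqrt q log q).  Hence h < q^O(sqrt q log q), which is below 2^k by
   Chebyshev's bound pi(q) >> q / log q once n is large, and ftop n <= 4^k. *)

From HB Require Import structures.
From mathcomp Require Import all_boot all_order all_algebra.
From mathcomp Require Import zify.
Import Order.TTheory GRing.Theory Num.Theory.
Set Implicit Arguments. Unset Strict Implicit. Unset Printing Implicit Defensive.

Lemma logn_squarefree_le1 p m : squarefree m -> logn p m <= 1.
Proof.
case/andP=> m_gt0 /allP sq_m; have [pm | ] := boolP (p \in primes m).
  have p_pr : prime p by move: pm; rewrite mem_primes => /andP[].
  by have := sq_m p pm; rewrite mulnn pfactor_dvdn // -ltnNge ltnS.
by rewrite -logn_gt0 lt0n negbK => /eqP->.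
Qed.

Lemma squarefree_logn m : 0 < m -> (forall p, logn p m <= 1) -> squarefree m.
Proof.
move=> m_gt0 logm_le1; rewrite /squarefree m_gt0; apply/allP => p pm.
have p_pr : prime p by move: pm; rewrite mem_primes => /andP[].
by rewrite mulnn pfactor_dvdn // -ltnNge ltnS.
Qed.

Lemma squarefree_gt0 m : squarefree m -> 0 < m.
Proof. by case/andP. Qed.

Lemma squarefree_dvd d m : squarefree m -> d %| m -> squarefree d.
Proof.
move=> sq_m dm; have m_gt0 := squarefree_gt0 sq_m.
apply: squarefree_logn (dvdn_gt0 m_gt0 dm) _ => p.
exact: leq_trans (dvdn_leq_log p m_gt0 dm) (logn_squarefree_le1 p sq_m).
Qed.

Lemma squarefree_part pi m : squarefree m -> squarefree m`_pi.
Proof. by move/squarefree_dvd; apply; apply: dvdn_part. Qed.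

Lemma prod_primes_squarefree m : squarefree m -> \prod_(p <- primes m) p = m.
Proof.
move=> sq_m; rewrite [RHS]prod_prime_decomp ?squarefree_gt0 // prime_decompE big_map.
apply: eq_big_seq => p pm; have := logn_squarefree_le1 p sq_m.
by rewrite -logn_gt0 in pm; case: (logn p m) pm => [|[|]].
Qed.

Lemma squarefree_eq a b :
  squarefree a -> squarefree b -> primes a =i primes b -> a = b.
Proof.
move=> sq_a sq_b eq_ab.
rewrite -(prod_primes_squarefree sq_a) -(prod_primes_squarefree sq_b).
by rewrite (irr_sorted_eq ltn_trans ltnn (sorted_primes a) (sorted_primes b) eq_ab).
Qed.

Lemma nprimes_partC pi m : nprimes m`_pi + nprimes m`_pi^' = nprimes m.
Proof. by rewrite /nprimes !primes_part !size_filter count_predC. Qed.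

Lemma leq_expn2r m n e : m <= n -> m ^ e <= n ^ e.
Proof. by case: e => // e le_mn; rewrite leq_exp2r. Qed.

Lemma expn_size_le_prod b s : {in s, forall x, b <= x} -> b ^ size s <= \prod_(x <- s) x.
Proof.
elim: s => [|x s IHs] le_bs; first by rewrite big_nil.
rewrite big_cons expnS leq_mul ?le_bs ?mem_head // IHs // => y ys.
by rewrite le_bs // inE ys orbT.
Qed.

Lemma prod_le_expn_size b (s : seq nat) F :
  {in s, forall x, F x <= b} -> \prod_(x <- s) F x <= b ^ size s.
Proof.
elim: s => [|x s IHs] le_sb; first by rewrite big_nil.
rewrite big_cons expnS leq_mul ?le_sb ?mem_head // IHs // => y ys.
by rewrite le_sb // inE ys orbT.
Qed.

Definition primepi (y : nat) : nat := count prime (iota 0 y).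

Definition primorial (y : nat) : nat := \prod_(0 <= p < y | prime p) p.

Lemma primepiS y : primepi y.+1 = primepi y + prime y.
Proof. by rewrite /primepi -addn1 iotaD count_cat /= addn0. Qed.

Lemma leq_primepi y z : y <= z -> primepi y <= primepi z.
Proof.
move/subnKC <-; elim: (z - y) => [|d IHd]; first by rewrite addn0.
by rewrite addnS primepiS (leq_trans IHd) ?leq_addr.
Qed.

Lemma exists_primepi_eq k : exists2 q, prime q & primepi q = k.
Proof.
have primepi_unbounded : exists y, k < primepi y.
  elim: k => [|k [y lt_ky]]; first by exists 3.
  have [p lt_yp p_pr] := prime_above y.
  exists p.+1; rewrite primepiS p_pr addn1 ltnS (leq_trans lt_ky) //.
  exact/leq_primepi/ltnW.
have [[|y] lt_k_y min_y] := ex_minnP primepi_unbounded; first by [].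
have le_y_k : primepi y <= k by rewrite leqNgt; apply/negP => /min_y; rewrite ltnn.
move: lt_k_y; rewrite primepiS; case: (boolP (prime y)) => [y_pr | _].
  by rewrite addn1 ltnS => le_k_y; exists y => //; apply/eqP; rewrite eqn_leq le_y_k.
by rewrite addn0 ltnNge le_y_k.
Qed.

Lemma logn_prod_primes r s : all prime s -> logn r (\prod_(p <- s) p) = count_mem r s.
Proof.
elim: s => [|p s IHs] /=; first by rewrite big_nil logn1.
case/andP=> p_pr s_pr.
have s_gt0 : 0 < \prod_(x <- s) x
  by rewrite big_seq prodn_cond_gt0 // => x /(allP s_pr)/prime_gt0.
by rewrite big_cons (lognM _ (prime_gt0 p_pr) s_gt0) logn_prime // IHs // eq_sym.
Qed.

Lemma logn_primorial r y : logn r (primorial y) = prime r && (r < y).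
Proof.
rewrite /primorial -big_filter logn_prod_primes ?filter_all //.
by rewrite count_uniq_mem ?filter_uniq ?iota_uniq // mem_filter mem_iota add0n subn0.
Qed.

Lemma primorial_gt0 y : 0 < primorial y.
Proof. by apply: prodn_cond_gt0 => p /prime_gt0. Qed.

Lemma squarefree_primorial y : squarefree (primorial y).
Proof.
by apply: squarefree_logn (primorial_gt0 y) _ => p; rewrite logn_primorial leq_b1.
Qed.

Lemma mem_primes_primorial r y : (r \in primes (primorial y)) = prime r && (r < y).
Proof. by rewrite -logn_gt0 logn_primorial lt0b. Qed.

Lemma nprimes_primorial y : nprimes (primorial y) = primepi y.
Proof.
rewrite /nprimes /primepi -size_filter.
congr size; apply: (irr_sorted_eq ltn_trans ltnn (sorted_primes _)).
  by apply: sorted_filter; [exact: ltn_trans | exact: iota_ltn_sorted].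
by move=> r; rewrite mem_primes_primorial mem_filter mem_iota.
Qed.

Lemma primorialS q : prime q -> primorial q.+1 = primorial q * q.
Proof.
by move=> q_pr; rewrite /primorial big_mkcond big_nat_recr //= -big_mkcond q_pr.
Qed.

Lemma leq_primorial y z : y <= z -> primorial y <= primorial z.
Proof.
move=> le_yz; rewrite /primorial (big_cat_nat (leq0n y) le_yz) /=.
by rewrite leq_pmulr // prodn_cond_gt0 // => p /prime_gt0.
Qed.

Lemma leq_nprimes_maxface n m :
  squarefree m -> 0 < m <= n -> nprimes m <= maxface n.
Proof.
move=> sq_m /andP[m_gt0 le_mn].
by apply: (leq_bigmax_seq (F := nprimes) m) => //; rewrite mem_index_iota m_gt0 ltnS.
Qed.

Lemma ltn_primorial_maxface n q :
  prime q -> primepi q = maxface n -> n < primorial q.+1.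
Proof.
move=> q_pr pi_q; rewrite ltnNge; apply/negP => le_Pn.
have := leq_nprimes_maxface (squarefree_primorial q.+1) (n := n).
rewrite primorial_gt0 le_Pn nprimes_primorial primepiS q_pr pi_q addn1 ltnn.
by move/(_ isT).
Qed.

Section SplitAtPrime.

Variables (q m : nat).
Hypothesis sq_m : squarefree m.
Local Notation small := [pred p | p < q].

Lemma part_small_primorial : m`_small = (primorial q)`_\pi(m).
Proof.
apply: squarefree_eq; rewrite ?squarefree_part ?squarefree_primorial // => p.
rewrite !primes_part !mem_filter mem_primes_primorial !inE /=.
rewrite andbC; case: (boolP (p \in primes m)) => //=.
by rewrite mem_primes => /andP[->].
Qed.

Lemma exists_cofactor : nprimes m = primepi q -> m < primorial q * q ->
  exists c, [/\ squarefree c, {in primes c, forall p, p < q},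
                nprimes c = nprimes m`_small^' & m`_small^' < q * c].
Proof.
move=> nprimes_m lt_m_Pq; set P := primorial q.
(* The primes below q that do not divide m. *)
exists P`_(\pi(m))^'; split.
- exact/squarefree_part/squarefree_primorial.
- move=> p; rewrite primes_part mem_filter mem_primes_primorial.
  by case/and3P.
- apply/eqP; rewrite -(eqn_add2l (nprimes P`_\pi(m))) nprimes_partC nprimes_primorial.
  by rewrite -part_small_primorial nprimes_partC nprimes_m.
move: lt_m_Pq; rewrite -{1}(partnC small (squarefree_gt0 sq_m)).
rewrite -{1}(partnC \pi(m) (primorial_gt0 q)) -part_small_primorial -mulnA.
by rewrite ltn_pmul2l ?part_gt0 // mulnC.
Qed.

End SplitAtPrime.

Lemma bernoulli_nat a t n : a ^ n.+1 + n.+1 * t * a ^ n <= (a + t) ^ n.+1.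
Proof.
elim: n => [|n IHn]; first by rewrite !expn1 expn0 muln1 mul1n.
rewrite [(a + t) ^ n.+2]expnS (leq_trans _ (leq_mul (leqnn (a + t)) IHn)) //.
rewrite !expnS; nia.
Qed.

Lemma expn_subn_double_le q t v : 0 < v -> q <= v * t -> (q - t) ^ v * 2 <= q ^ v.
Proof.
case: v => // v _ le_q_vt; have [le_qt | lt_tq] := leqP q t.
  by rewrite (eqP le_qt) exp0n.
have := bernoulli_nat (q - t) t v; rewrite subnK; last exact: ltnW.
apply: leq_trans.
rewrite muln2 -addnn leq_add2l expnS leq_mul2r.
by rewrite (leq_trans (leq_subr t q) le_q_vt) orbT.
Qed.

Lemma prod_uniq_le q t s : uniq s -> {in s, forall x, x < q} -> 2 * t <= size s ->
  \prod_(x <- s) x <= q ^ (size s - t) * (q - t) ^ t.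
Proof.
move=> uniq_s lt_sq le_2t_s.
rewrite (bigID (fun x => x <= q - t)) /=.
set a := count (fun x => x <= q - t) s.
set b := count (predC (fun x => x <= q - t)) s.
have size_s : a + b = size s by rewrite count_predC.
have le_b_t : b <= t.-1.
  rewrite /b -size_filter -[t.-1](size_iota (q - t).+1); apply: uniq_leq_size.
    exact: filter_uniq.
  move=> x; rewrite mem_filter /= mem_iota -ltnNge => /andP[lt_x xs].
  have := lt_sq x xs; lia.
have le_small : \prod_(x <- s | x <= q - t) x <= (q - t) ^ a.
  rewrite -big_filter (leq_trans (prod_le_expn_size (b := q - t) _)) ?size_filter //.
  by move=> x; rewrite mem_filter => /andP[].
have le_large : \prod_(x <- s | ~~ (x <= q - t)) x <= q ^ b.
  rewrite -big_filter (leq_trans (prod_le_expn_size (b := q) _)) ?size_filter //.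
  by move=> x; rewrite mem_filter => /andP[_ /lt_sq/ltnW].
apply: leq_trans (leq_mul le_small le_large) _.
have -> : a = t + (a - t) by lia.
rewrite expnD -mulnA mulnC leq_mul //.
have -> : size s - t = (a - t) + b by lia.
by rewrite expnD leq_mul2r leq_expn2r ?leq_subr ?orbT.
Qed.

Lemma size_uniq_lt q v e s : uniq s -> {in s, forall x, x < q} ->
  q < 2 ^ e -> q <= v * (v * e) -> q ^ size s < q * \prod_(x <- s) x ->
  size s < 2 * (v * e).
Proof.
move=> uniq_s lt_sq lt_q_2e le_q_vve lt_qs; rewrite ltnNge; apply/negP => le_st.
have [q_gt0 prod_gt0] : 0 < q /\ 0 < \prod_(x <- s) x.
  by apply/andP; rewrite -muln_gt0 (leq_trans _ lt_qs).
have v_gt0 : 0 < v.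
  by case: (posnP v) => // v0; move: le_q_vve q_gt0; rewrite v0; lia.
set t := v * e in le_q_vve le_st *.
(* Bernoulli: (1 - t/q)^v <= 1/2 as v t >= q; raising to the power e gives: *)
have halve : (q - t) ^ t * 2 ^ e <= q ^ t.
  have := leq_expn2r e (expn_subn_double_le v_gt0 le_q_vve).
  by rewrite expnMn -!expnM.
have : \prod_(x <- s) x * 2 ^ e < \prod_(x <- s) x * q.
  rewrite [_ * q]mulnC (leq_ltn_trans _ lt_qs) //.
  apply: leq_trans (leq_mul (prod_uniq_le uniq_s lt_sq le_st) (leqnn _)) _.
  have le_ts : t <= size s by lia.
  rewrite -mulnA -[in leqRHS](subnK le_ts) expnD.
  by rewrite leq_mul2l halve orbT.
by rewrite ltn_pmul2l // ltnNge ltnW.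
Qed.

Lemma exp2_le_central_bin N : 2 ^ N <= 'C(N.*2, N).
Proof.
elim: N => [|N IHN]; first by rewrite bin0.
rewrite doubleS !binS expnS mul2n -addnn leq_add //.
  exact: leq_trans IHN (leq_addl _ _).
exact: leq_trans IHN (leq_bin2l _ (leqnSn _)).
Qed.

Lemma logn_fact_widen p a L : prime p -> a <= L ->
  logn p a`! = \sum_(1 <= k < L.+1) a %/ p ^ k.
Proof.
move=> p_pr le_aL; rewrite logn_fact // [RHS](big_cat_nat _ (n := a.+1)) //= ?ltnS //.
rewrite [X in _ + X]big1_seq ?addn0 // => k /andP[_]; rewrite mem_index_iota.
case/andP=> lt_ak _; rewrite divn_small // (leq_trans lt_ak) // ltnW //.
exact/ltn_expl/prime_gt1.
Qed.

Lemma sum_leq_indicator M t : \sum_(1 <= k < M.+1) (k <= t) = minn M t.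
Proof.
elim: M => [|M IHM]; first by rewrite big_geq // min0n.
by rewrite big_nat_recr //= IHM; case: (leqP M.+1 t) => /=; lia.
Qed.

Lemma logn_bin_le p L m : prime p -> logn p 'C(L, m) <= trunc_log p L.
Proof.
move=> p_pr; have p_gt1 := prime_gt1 p_pr.
have [le_mL | lt_Lm] := leqP m L; last by rewrite bin_small // logn0.
have logn_fact_L : logn p L`! = logn p 'C(L, m) + (logn p m`! + logn p (L - m)`!).
  by rewrite -(bin_fact le_mL) !lognM ?muln_gt0 ?fact_gt0 ?bin_gt0.
suff : logn p L`! <= logn p m`! + logn p (L - m)`! + trunc_log p L by lia.
rewrite (logn_fact_widen p_pr (leqnn L)) (logn_fact_widen p_pr le_mL).
rewrite (logn_fact_widen p_pr (leq_subr m L)) -big_split /=.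
apply: leq_trans (leq_add (leqnn _) (geq_minr L (trunc_log p L))).
rewrite -sum_leq_indicator -big_split /=.
apply: leq_sum => k _; have d_gt0 : 0 < p ^ k by rewrite expn_gt0 prime_gt0.
rewrite -{1}(subnKC le_mL) divnD // leq_add2l; case le_d_mod: (p ^ k <= _) => //.
rewrite lt0b; apply: trunc_log_max => //; apply: leq_trans (idP le_d_mod) _.
by rewrite -[leqRHS](subnKC le_mL) leq_add ?leq_mod.
Qed.

Lemma bin_le_expn_primepi L m : 0 < L -> 'C(L, m) <= L ^ primepi L.+1.
Proof.
move=> L_gt0; have [le_mL | lt_Lm] := leqP m L; last by rewrite bin_small.
set C := 'C(L, m); have C_gt0 : 0 < C by rewrite bin_gt0.
have le_pow_L p : prime p -> p ^ logn p C <= L.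
  move=> p_pr; apply: leq_trans (trunc_logP (prime_gt1 p_pr) L_gt0).
  by rewrite leq_exp2l ?prime_gt1 ?logn_bin_le.
rewrite {1}(prod_prime_decomp C_gt0) prime_decompE big_map /=.
apply: leq_trans (prod_le_expn_size _) (leq_pexp2l L_gt0 _).
  by move=> p; rewrite mem_primes => /andP[/le_pow_L].
rewrite /primepi -size_filter uniq_leq_size ?primes_uniq // => p pC.
have p_pr : prime p by move: pC; rewrite mem_primes => /andP[].
rewrite mem_filter p_pr mem_iota /= ltnS (leq_trans _ (le_pow_L p p_pr)) //.
by rewrite -{1}(expn1 p) (leq_pexp2l (prime_gt0 p_pr)) // logn_gt0.
Qed.

Lemma exp2_half_le_expn_primepi x : 2 ^ x.-1./2 <= x ^ primepi x.
Proof.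
set N := x.-1./2; have [N0 | N_gt0] := posnP N.
  by rewrite N0 expn_gt0; case: x {N N0}.
have lt_2N_x : N.*2 < x.
  have := odd_double_half x.-1; rewrite -/N; lia.
apply: leq_trans (exp2_le_central_bin N) _.
have L_gt0 : 0 < N.*2 by rewrite double_gt0.
apply: leq_trans (bin_le_expn_primepi N L_gt0) _.
rewrite (leq_trans (leq_expn2r _ (ltnW lt_2N_x))) // leq_pexp2l ?leq_primepi //.
exact: leq_ltn_trans lt_2N_x.
Qed.

Lemma leq_primepi_log q e : q < 2 ^ e -> q <= 2 * e * primepi q + 2.
Proof.
move=> lt_q_2e; have := exp2_half_le_expn_primepi q.
move/leq_trans/(_ (leq_expn2r (primepi q) (ltnW lt_q_2e))).
rewrite -expnM leq_exp2l // => le_half.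
by have := odd_double_half q.-1; lia.
Qed.

Lemma large_part_lt q m v e : squarefree m -> nprimes m = primepi q ->
  m < primorial q * q -> q < 2 ^ e -> q <= v * (v * e) ->
  m`_[pred p | p < q]^' < q ^ (2 * (v * e)).
Proof.
move=> sq_m nprimes_m lt_m lt_q_2e le_q_vve; set h := m`_[pred p | p < q]^'.
have [c [sq_c lt_cq nprimes_c lt_h_qc]] := exists_cofactor sq_m nprimes_m lt_m.
have le_qh : q ^ nprimes h <= h.
  have sq_h : squarefree h := squarefree_part _ sq_m.
  rewrite -{2}(prod_primes_squarefree sq_h) expn_size_le_prod //.
  by move=> p; rewrite primes_part mem_filter !inE -leqNgt => /andP[].
have lt_size : nprimes h < 2 * (v * e).
  rewrite -nprimes_c; apply: size_uniq_lt (primes_uniq c) lt_cq lt_q_2e le_q_vve _.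
  by rewrite prod_primes_squarefree // -/(nprimes c) nprimes_c (leq_ltn_trans le_qh).
have [q_gt0 _] : 0 < q /\ 0 < c by apply/andP; rewrite -muln_gt0 (leq_trans _ lt_h_qc).
rewrite -nprimes_c in lt_size.
apply: leq_trans lt_h_qc (leq_trans _ (leq_pexp2l q_gt0 lt_size)).
rewrite expnS leq_mul2l -{1}(prod_primes_squarefree sq_c) prod_le_expn_size ?orbT //.
by move=> p /lt_cq /ltnW.
Qed.

Lemma expn4_le_exp2 w : 16 <= w -> w ^ 4 <= 2 ^ w.
Proof.
move/subnKC <-; elim: (w - 16) => [|d IHd]; first by rewrite addn0.
rewrite addnS expnS (leq_trans _ (leq_mul (leqnn 2) IHd)) //.
set u := 16 + d; have u_ge : 16 <= u by rewrite leq_addr.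
rewrite !expnS expn0 !muln1.
have u2 : 16 * u <= u * u by rewrite leq_mul2r u_ge orbT.
have u3 : 16 * (u * u) <= u * (u * u) by rewrite leq_mul2r u_ge orbT.
have u4 : 16 * (u * (u * u)) <= u * (u * (u * u)) by rewrite leq_mul2r u_ge orbT.
nia.
Qed.

Lemma exp2_square_bound w e k : 256 <= w -> e <= w.*2.+2 ->
  2 ^ w * 2 ^ w <= 2 * e * k + 2 -> e * (4 * 2 ^ w * e) <= k.
Proof.
move=> w_ge le_e_w sq_le; rewrite leqNgt; apply/negP => lt_k.
set X := 2 ^ w in sq_le lt_k.
have le_w4_X : w ^ 4 <= X by apply: expn4_le_exp2 (leq_trans _ w_ge).
have lt_e3_X : 8 * e ^ 3 < X.
  have : e ^ 3 <= (3 * w) ^ 3 by apply: leq_expn2r; lia.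
  rewrite expnMn; move: le_w4_X; rewrite expnS; set W := w ^ 3 => le_X.
  have : 256 * W <= w * W by rewrite leq_mul2r w_ge orbT.
  have : 0 < W by rewrite expn_gt0; lia.
  lia.
have X_gt2 : 2 < X.
  by apply: leq_trans (leq_pexp2l (isT : 0 < 2) (_ : 2 <= w)); last lia.
have e_gt0 : 0 < e by case: (posnP e) sq_le => // ->; nia.
have : 2 * e * k.+1 <= 2 * e * (e * (4 * X * e)) by rewrite leq_mul2l lt_k orbT.
have : (8 * e ^ 3).+1 * X <= X * X by rewrite leq_mul2r lt_e3_X orbT.
rewrite !expnS expn0 muln1; nia.
Qed.

Lemma large_part_lt_exp2 q m : 2 ^ 512 <= q -> squarefree m ->
  nprimes m = primepi q -> m < primorial q * q ->
  m`_[pred p | p < q]^' < 2 ^ primepi q.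
Proof.
move=> le_q sq_m nprimes_m lt_m; set L := trunc_log 2 q; set w := L./2.
have q_gt0 : 0 < q by rewrite (leq_trans _ le_q) ?expn_gt0.
have lt_q_2e : q < 2 ^ L.+1 := trunc_log_ltn q (isT : 1 < 2).
have le_2L_q : 2 ^ L <= q := trunc_logP (isT : 1 < 2) q_gt0.
have L_ge : 512 <= L := trunc_log_max (isT : 1 < 2) le_q.
have [le_wL le_Lw] : w.*2 <= L /\ L <= w.*2.+1 by have := odd_double_half L; lia.
(* v := 2^(w+1) is about 2 sqrt q, so the exponent 2 v e is O(sqrt q log q). *)
have le_q_vve : q <= 2 ^ w.+1 * (2 ^ w.+1 * L.+1).
  apply: leq_trans (ltnW lt_q_2e) _; rewrite mulnA -expnD.
  by rewrite (leq_trans _ (leq_pmulr _ _)) // leq_exp2l //; lia.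
apply: leq_trans (large_part_lt sq_m nprimes_m lt_m lt_q_2e le_q_vve) _.
apply: leq_trans (leq_expn2r _ (ltnW lt_q_2e)) _; rewrite -expnM leq_exp2l //.
have le_ww_q : 2 ^ w * 2 ^ w <= 2 * L.+1 * primepi q + 2.
  rewrite -expnD addnn (leq_trans (leq_trans _ le_2L_q) (leq_primepi_log lt_q_2e)) //.
  by rewrite leq_exp2l.
have w_ge : 256 <= w by lia.
have e_le : L.+1 <= w.*2.+2 by lia.
have := exp2_square_bound w_ge e_le le_ww_q; rewrite expnS; nia.
Qed.

Lemma card_primes_below y : #|[set p : 'I_y | prime p]| = primepi y.
Proof.
rewrite -sum1dep_card -(big_mkord prime (fun _ => 1)) sum1_count.
by rewrite /index_iota subn0.
Qed.

Lemma ftop_le_split n q H :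
  (forall m, 0 < m <= n -> squarefree m -> nprimes m = maxface n ->
     m`_[pred p | p < q]^' <= H) ->
  ftop n <= 2 ^ primepi q * H.+1.
Proof.
move=> le_large_H; set small := [pred p | p < q].
rewrite /ftop; set A := [set m : 'I_n.+1 | _].
have le_large (m : 'I_n.+1) : m \in A -> m`_small^' <= H.
  rewrite inE => /andP[/andP[m_gt0 sq_m] /eqP k_m].
  by rewrite le_large_H // m_gt0 -ltnS ltn_ord.
pose F (m : 'I_n.+1) :=
  ([set p : 'I_q | val p \in primes m], inord (m`_small^') : 'I_H.+1).
have F_inj : {in A &, injective F}.
  move=> m1 m2 A1 A2 eqF; have := A1; have := A2.
  rewrite !inE => /andP[/andP[m2_gt0 sq2] _] /andP[/andP[m1_gt0 sq1] _].
  have eq_small : m1`_small = m2`_small.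
    apply: squarefree_eq; rewrite ?squarefree_part // => p.
    rewrite !primes_part !mem_filter inE /=; case: ltnP => //= lt_pq.
    have := congr1 (fun S : {set 'I_q} * 'I_H.+1 => Ordinal lt_pq \in S.1) eqF.
    by rewrite /= !inE.
  have eq_large : m1`_small^' = m2`_small^'.
    have := congr1 (fun x => val x.2) eqF.
    by rewrite /= !inordK // ltnS le_large.
  apply: val_inj; rewrite /= -(partnC small m1_gt0) -(partnC small m2_gt0).
  by rewrite eq_small eq_large.
rewrite -(card_in_imset F_inj).
set P := [set p : 'I_q | prime p].
have sub_F : [set F m | m in A] \subset setX (powerset P) [set: 'I_H.+1].
  apply/subsetP => _ /imsetP[m _ ->]; rewrite inE /= in_setT andbT powersetE.
  by apply/subsetP => p; rewrite !inE mem_primes => /andP[].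
apply: leq_trans (subset_leq_card sub_F) _.
by rewrite cardsX card_powerset cardsT card_ord card_primes_below.
Qed.

Lemma ftop_le_exp4 n : primorial (2 ^ 512) <= n -> ftop n <= 4 ^ maxface n.
Proof.
move=> le_n; have [q q_pr pi_q] := exists_primepi_eq (maxface n).
have lt_n := ltn_primorial_maxface q_pr pi_q.
have le_q : 2 ^ 512 <= q.
  rewrite leqNgt; apply/negP => lt_q.
  by have := leq_trans (leq_primorial lt_q) le_n; rewrite leqNgt lt_n.
have pow_gt0 : 0 < 2 ^ primepi q by rewrite expn_gt0.
apply: leq_trans (ftop_le_split (H := (2 ^ primepi q).-1) _) _.
  move=> m /andP[m_gt0 le_mn] sq_m nprimes_m; rewrite -ltnS prednK //.
  apply: large_part_lt_exp2; rewrite ?nprimes_m // -primorialS //.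
  exact: leq_ltn_trans le_mn lt_n.
by rewrite prednK // -expnMn pi_q.
Qed.

Local Open Scope ring_scope.

Theorem proposition3p4 :
  exists C : rat, 0 < C /\
    exists K : rat, exists N : nat, forall n : nat, (N <= n)%N ->
      (ftop n)%:R <= K * C ^+ dim_Delta n.
Proof.
exists 4; split => //; exists 4, (primorial (2 ^ 512)) => n le_n.
have le_exp4 : (4 ^ maxface n <= 4 * 4 ^ dim_Delta n)%N.
  by rewrite /dim_Delta; case: (maxface n) => //= k; rewrite expnS.
by rewrite -natrX -natrM ler_nat (leq_trans (ftop_le_exp4 le_n)).
Qed.
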